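(* Fix positive integers $m,n$ and $\alpha\in[0,1]$. Among all approval elections with $m$ candidates, $n$ voters, and saturation $\alpha$, an election $E$ has the largest value of $\mathrm{chd}(E)$ if and only if (a) all candidates are approved in some vote in $\mathrm{cen}(E)$, or (b) all candidates are disapproved in some vote in $\mathrm{cen}(E)$, or (c) for each candidate $c_j$, $|A(c_j)|\in\{\lfloor n/2\rfloor,\lceil n/2\rceil\}$.
   Context: An (approval) election is $E=(C,V)$ with $C=\{c_1,\dots,c_m\}$ and voters $V=(v_1,\dots,v_n)$, each vote a binary vector in $\{0,1\}^m$; $A(c)$ is the set of voters approving $c$, $A(v)$ the set of candidates approved by $v$. Saturation is $\mathrm{satr}(E)=\frac{1}{nm}\sum_{v\in V}|A(v)|$. $\mathrm{ham}(u,v)=\sum_j|u[j]-v[j]|$. A vote $u$ is central for $E$ if for each candidate $c_j$, $u[j]=v_i[j]$ for at least half of the voters $v_i$; $\mathrm{cen}(E)$ is the set of central votes. The central Hamming distance is $\mathrm{chd}(E)=\sum_{v_i\in V}\mathrm{ham}(v_i,u)$ for any $u\in\mathrm{cen}(E)$ (independent of the choice of $u$). *)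

From mathcomp Require Import all_boot all_order all_algebra.
Set Implicit Arguments. Unset Strict Implicit. Unset Printing Implicit Defensive.
Import Order.TTheory GRing.Theory Num.Theory.

(* An approval election with m candidates and n voters: voter i's vote is a
   binary vector over the candidates 'I_m; (E i j) = true iff voter i approves c_j. *)
Definition vote (m : nat) := {ffun 'I_m -> bool}.
Definition election (m n : nat) := {ffun 'I_n -> vote m}.

Definition napp (m : nat) (v : vote m) : nat := #|[set j | v j]|.

Definition supp (m n : nat) (E : election m n) (j : 'I_m) : nat :=
  #|[set i | E i j]|.

Definition satr (m n : nat) (E : election m n) : rat :=
  ((\sum_(i < n) napp (E i))%:R / (n * m)%:R)%R.

Definition ham (m : nat) (u v : vote m) : nat := #|[set j | u j != v j]|.

Definition central (m n : nat) (E : election m n) (u : vote m) : bool :=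
  [forall j : 'I_m, n <= 2 * #|[set i | E i j == u j]|].

Definition cen (m n : nat) (E : election m n) : {set vote m} :=
  [set u | central E u].

(* chd(E) = sum_i ham(v_i, u) for a (any) central vote u; cen E is never empty,
   so the default branch is never used. *)
Definition chd (m n : nat) (E : election m n) : nat :=
  match [pick u in cen E] with
  | Some u => \sum_(i < n) ham (E i) u
  | None => 0
  end.

From mathcomp Require Import all_boot all_order all_algebra zify.
Import Order.TTheory GRing.Theory Num.Theory.

(* Column by column, a central vote sides with the majority of candidate c_j,
   so chd(E) is the sum over candidates of the minority size
   min(|A(c_j)|, n - |A(c_j)|), while the saturation only fixes the total
   number of approvals.  Maximising chd is thus maximising a sum of the tent
   function s |-> min(s, n - s) under a fixed total, where the bounds
   chd <= total, chd <= mn - total and chd <= m*floor(n/2) are attained in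
   cases (a), (b) and (c) respectively.  Conversely, if none of (a)-(c) holds,
   some candidate lies strictly below floor(n/2) while another is above n/2
   (or symmetrically), and moving one approval between them raises chd. *)

Set Implicit Arguments.
Unset Strict Implicit.

Lemma card_set_nat (T : finType) (P : pred T) : #|[set x | P x]| = \sum_x (P x : nat).
Proof. by rewrite -sum1dep_card big_mkcond; apply: eq_bigr => x _; case: (P x). Qed.

Lemma sum_ord_ltn k N : \sum_(i < N) (i < k : nat) = minn k N.
Proof.
elim: N => [|N IHN]; first by rewrite big_ord0 minn0.
by rewrite big_ord_recr /= IHN; case: ltnP => /=; lia.
Qed.

Lemma half_bounds n :
  [/\ n./2 + n./2 <= n, n <= (n./2 + n./2).+1 & uphalf n + n./2 = n].
Proof.
by rewrite uphalf_half; have := odd_double_half n; rewrite -addnn; case: odd => /=; split; lia.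
Qed.

Section Minority.
Variable n : nat.

Definition minority (s : nat) : nat := minn s (n - s).

Lemma minority_addr_le s : s <= n -> minority s + s <= n.
Proof. by rewrite /minority; lia. Qed.

Lemma minority_le_half s : minority s <= n./2.
Proof. by have [] := half_bounds n; rewrite /minority; lia. Qed.

Lemma minority_id s : 2 * s <= n -> minority s = s.
Proof. by rewrite /minority; lia. Qed.

Lemma minority_addr s : s <= n -> n <= 2 * s -> minority s + s = n.
Proof. by rewrite /minority; lia. Qed.

Lemma minority_half s : s = n./2 \/ s = uphalf n -> minority s = n./2.
Proof. by have [] := half_bounds n; rewrite /minority; lia. Qed.

(* Moving one unit from x to y strictly increases the sum of minorities when
   one of them moves towards n/2 and the other does not move away from it. *)
Lemma minority_transfer x y : x <= n ->
  (n < 2 * x /\ y < n./2) \/ (uphalf n < x /\ 2 * y < n) ->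
  minority x + minority y < minority x.-1 + minority y.+1.
Proof. by have [] := half_bounds n; rewrite /minority; lia. Qed.

End Minority.

Section Elections.
Variables m n : nat.
Implicit Types (E : election m n) (u : vote m) (s : 'I_m -> nat).

Lemma supp_le E j : supp E j <= n.
Proof. by rewrite /supp -[leqRHS](card_ord n) max_card. Qed.

Lemma card_agree E j b :
  #|[set i | E i j == b]| = if b then supp E j else n - supp E j.
Proof.
case: b; first by apply: eq_card => i; rewrite !inE eqb_id.
have -> : [set i | E i j == false] = ~: [set i | E i j].
  by apply/setP => i; rewrite !inE eqbF_neg.
by have := cardsC [set i | E i j]; rewrite card_ord /supp; lia.
Qed.

Lemma sum_supp E : \sum_i napp (E i) = \sum_j supp E j.
Proof.
rewrite /napp /supp; under eq_bigr do rewrite card_set_nat.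
by rewrite exchange_big; apply: eq_bigr => j _; rewrite card_set_nat.
Qed.

Lemma satr_eq E1 E2 : 0 < n -> 0 < m ->
  satr E1 = satr E2 <-> \sum_j supp E1 j = \sum_j supp E2 j.
Proof.
move=> n_gt0 m_gt0; rewrite /satr !sum_supp; split=> [|->] //.
have nm_neq0 : ((n * m)%:R != 0 :> rat)%R by rewrite pnatr_eq0 -lt0n muln_gt0 n_gt0.
by move/(congr1 (fun x => x * (n * m)%:R)%R); rewrite !divfK // => /eqP; rewrite eqr_nat => /eqP.
Qed.

Lemma mem_cen E u :
  (u \in cen E) = [forall j, n <= 2 * (if u j then supp E j else n - supp E j)].
Proof. by rewrite inE; apply: eq_forallb => j; rewrite card_agree. Qed.

Lemma cen_constP E b : (exists2 u, u \in cen E & forall j, u j = b) <->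
  (forall j, n <= 2 * (if b then supp E j else n - supp E j)).
Proof.
split=> [[u]|b_central].
  by rewrite mem_cen => /forallP u_cen u_const j; rewrite -(u_const j).
exists [ffun=> b]; last by move=> j; rewrite ffunE.
by rewrite mem_cen; apply/forallP => j; rewrite ffunE.
Qed.

Lemma cen_all_approve E :
  (exists2 u, u \in cen E & forall j, u j = true) <-> (forall j, n <= 2 * supp E j).
Proof. exact: cen_constP. Qed.

Lemma cen_all_disapprove E :
  (exists2 u, u \in cen E & forall j, u j = false) <-> (forall j, 2 * supp E j <= n).
Proof.
rewrite cen_constP; split=> H j; have := H j; have := supp_le E j; lia.
Qed.

Lemma ham_sum_central E u :
  u \in cen E -> \sum_i ham (E i) u = \sum_j minority n (supp E j).
Proof.
rewrite mem_cen => /forallP u_cen.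
under eq_bigr do rewrite /ham card_set_nat.
rewrite exchange_big; apply: eq_bigr => j _; rewrite -card_set_nat.
have := u_cen j; have := supp_le E j.
rewrite (eq_card (B := [set i | E i j == ~~ u j])); last first.
  by move=> i; rewrite !inE; case: (u j); case: (E i j).
by rewrite card_agree /minority; case: (u j) => /=; lia.
Qed.

Lemma majority_central E : [ffun j => n <= 2 * supp E j] \in cen E.
Proof.
rewrite mem_cen; apply/forallP => j; rewrite ffunE.
by have := supp_le E j; case: (leqP n (2 * supp E j)) => /=; lia.
Qed.

Lemma chd_minority E : chd E = \sum_j minority n (supp E j).
Proof.
rewrite /chd; case: pickP => [u /ham_sum_central //|no_cen].
by have := no_cen [ffun j => n <= 2 * supp E j]; rewrite /= majority_central.
Qed.

Lemma chd_le_total E : chd E <= \sum_j supp E j.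
Proof. by rewrite chd_minority; apply: leq_sum => j _; apply: geq_minl. Qed.

Lemma chd_addr_le E : chd E + \sum_j supp E j <= m * n.
Proof.
rewrite chd_minority -big_split -[in leqRHS](card_ord m) -sum_nat_const /=.
by apply: leq_sum => j _; apply/minority_addr_le/supp_le.
Qed.

Lemma chd_le_half E : chd E <= m * n./2.
Proof.
rewrite chd_minority -[in leqRHS](card_ord m) -sum_nat_const.
by apply: leq_sum => j _; apply: minority_le_half.
Qed.

Lemma chd_all_approve E : (forall j, n <= 2 * supp E j) -> chd E + \sum_j supp E j = m * n.
Proof.
move=> approve; rewrite chd_minority -big_split -[in RHS](card_ord m) -sum_nat_const /=.
by apply: eq_bigr => j _; apply/minority_addr/approve/supp_le.
Qed.

Lemma chd_all_disapprove E : (forall j, 2 * supp E j <= n) -> chd E = \sum_j supp E j.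
Proof. by move=> disapprove; rewrite chd_minority; apply: eq_bigr => j _; apply: minority_id. Qed.

Lemma chd_balanced E :
  (forall j, supp E j = n./2 \/ supp E j = uphalf n) -> chd E = m * n./2.
Proof.
move=> balanced; rewrite chd_minority -[in RHS](card_ord m) -sum_nat_const.
by apply: eq_bigr => j _; apply: minority_half.
Qed.

Definition staircase s : election m n := [ffun i : 'I_n => [ffun j => i < s j]].

Lemma supp_staircase s j : s j <= n -> supp (staircase s) j = s j.
Proof.
move=> sj_le; rewrite /supp card_set_nat.
under eq_bigr do rewrite !ffunE.
by rewrite sum_ord_ltn; apply/minn_idPl.
Qed.

Definition transfer s a b x : nat :=
  if x == a then (s a).-1 else if x == b then (s b).+1 else s x.

Lemma sum_transfer (F : nat -> nat) s a b : a != b ->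
  \sum_x F (transfer s a b x) + F (s a) + F (s b) =
  \sum_x F (s x) + F (s a).-1 + F (s b).+1.
Proof.
move=> ab; rewrite (bigD1 a) // (bigD1 b) 1?eq_sym //=.
rewrite [in RHS](bigD1 a) // [in RHS](bigD1 b) 1?eq_sym //=.
rewrite /transfer eqxx eq_sym (negbTE ab) eqxx.
rewrite (eq_bigr (F \o s)) => [|x /andP[xb xa]]; last by rewrite (negbTE xa) (negbTE xb).
by rewrite /=; lia.
Qed.

Lemma chd_transfer_lt E a b :
  (n < 2 * supp E a /\ supp E b < n./2) \/ (uphalf n < supp E a /\ 2 * supp E b < n) ->
  exists2 E' : election m n, \sum_j supp E' j = \sum_j supp E j & chd E < chd E'.
Proof.
move=> dir; have gain := minority_transfer (supp_le E a) dir.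
have [sa_gt0 sb_lt_sa sb_ltn] : [/\ 0 < supp E a, supp E b < supp E a & supp E b < n].
  by split; have [] := half_bounds n; have := supp_le E a; lia.
have ab : a != b by apply: contraTneq sb_lt_sa => ->; rewrite ltnn.
set s := transfer (supp E) a b.
have supp_s : supp (staircase s) =1 s.
  move=> x; apply: supp_staircase; have := supp_le E x.
  by rewrite /s /transfer; case: (x =P a) => [->|_]; [|case: (x =P b) => [->|_]]; lia.
exists (staircase s).
  rewrite (eq_bigr s (fun x _ => supp_s x)).
  by have := sum_transfer id (supp E) ab; rewrite -/s /=; lia.
rewrite !chd_minority [X in _ < X](eq_bigr (minority n \o s)) => [|x _]; last by rewrite supp_s.
by have := sum_transfer (minority n) (supp E) ab; rewrite -/s /=; lia.
Qed.

Lemma chd_improvable E jlo jhi j :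
  2 * supp E jlo < n -> n < 2 * supp E jhi -> supp E j != n./2 -> supp E j != uphalf n ->
  exists2 E' : election m n, \sum_j supp E' j = \sum_j supp E j & chd E < chd E'.
Proof.
move=> small large not_low not_high.
have [low|high] := ltnP (supp E j) n./2.
  by apply: (chd_transfer_lt (a := jhi) (b := j)); left.
apply: (chd_transfer_lt (a := j) (b := jlo)); right; split=> //.
by move: not_low not_high; have [] := half_bounds n; lia.
Qed.

End Elections.

Theorem lemma2 (m n : nat) (hm : (0 < m)%N) (hn : (0 < n)%N) (alpha : rat)
  (ha0 : (0 <= alpha)%R) (ha1 : (alpha <= 1)%R)
  (E : election m n) (hE : satr E = alpha) :
  (forall E' : election m n, satr E' = alpha -> (chd E' <= chd E)%N) <->
  ((exists2 u, u \in cen E & forall j : 'I_m, u j = true) \/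
   (exists2 u, u \in cen E & forall j : 'I_m, u j = false) \/
   (forall j : 'I_m, supp E j = n./2 \/ supp E j = uphalf n)).
Proof.
subst alpha; split=> [chd_max|].
  have [/forallP approve|/forallPn[k]] := boolP [forall j, n <= 2 * supp E j].
    by left; apply/cen_all_approve.
  rewrite -ltnNge => small.
  have [/forallP disapprove|/forallPn[j]] := boolP [forall j, 2 * supp E j <= n].
    by right; left; apply/cen_all_disapprove.
  rewrite -ltnNge => large; right; right=> l.
  case: (eqVneq (supp E l) n./2) => [|not_low]; first by left.
  case: (eqVneq (supp E l) (uphalf n)) => [|not_high]; first by right.
  have [E' same_total] := chd_improvable small large not_low not_high.
  by rewrite ltnNge chd_max // satr_eq.
move=> optimal E' /(satr_eq _ _ hn hm) same_total.
case: optimal => [/cen_all_approve|[/cen_all_disapprove|]] opt.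
- by have := chd_addr_le E'; rewrite same_total -(chd_all_approve opt) leq_add2r.
- by rewrite (chd_all_disapprove opt) -same_total chd_le_total.
- by rewrite (chd_balanced opt) chd_le_half.
Qed.
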